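(* Let $D$ be a reduced knot diagram with $n$ vertices. Consider the original $2$-color region select game on $D$, i.e. $k=2$ with all increment numbers equal to $1$. Fix a checkerboard shading of $D$. Then the following hold. (i) Every color configuration has a unique solving pattern in which a given shaded region and a given unshaded region are not pushed. (ii) Let $S$ be a set of $i$ regions containing at least one shaded and at least one unshaded region. Then exactly $2^{n+2-i}$ color configurations have a solving pattern that does not push any region of $S$. (iii) Let $S$ be a set of $i\ge1$ regions that are all shaded, or all unshaded. Then exactly $2^{n+1-i}$ color configurations have a solving pattern that does not push any region of $S$.
   Context: Diagrams: a link (knot) diagram $D$ is the underlying graph of a regular projection of a link (knot) into $S^2$. Its vertices are the crossings, each of valence 4, and over/under information is ignored. Components without crossings are closed loops, each regarded as one edge with no vertices. Regions of $D$ are the connected components of $S^2\setminus D$. A vertex or edge is incident to a region if it lies in the boundary of that region. Two regions are adjacent if they are incident to a common edge. A vertex $v$ is reducible if some circle in $S^2$ meets $D$ transversely only at $v$, and irreducible otherwise. An irreducible vertex is incident to four distinct regions. A reducible vertex $v$ is incident to exactly three regions $r_0,r_1,r_2$, where $r_0$ touches $v$ from two sides and $r_1,r_2$ touch it from one side. A knot diagram with $n$ vertices has $n+2$ regions. A knot diagram is reduced if all its vertices are irreducible. Ring: for an integer $k\ge2$ let $\mathbb{Z}_k=\mathbb{Z}/k\mathbb{Z}$, and for $k=\infty$ let $\mathbb{Z}_\infty=\mathbb{Z}$. Game versions: a version of the $k$-color region select game on $D$ is a choice of an increment number $a(v,r)\in\mathbb{Z}_k$ for every incident vertex–region pair, subject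 to the following rules. - If $k<\infty$ and $v$ is irreducible, then $a(v,r)=a_v$ is the same for all regions $r$ incident to $v$, and $a_v$ is not a zero divisor of $\mathbb{Z}_k$. - If $k<\infty$ and $v$ is reducible, then $a(v,r_0)$ is arbitrary, while $a(v,r_1)$ and $a(v,r_2)$ are not zero divisors. - If $k=\infty$, then $a(v,r)=1$, except that $a(v,r_0)\in\mathbb{Z}$ is arbitrary when $v$ is reducible. - The original game is the version in which all increment numbers equal $1$. Game matrix: enumerate the vertices as $v_1,\dots,v_n$ and the regions as $r_1,\dots,r_m$. The game matrix is the $n\times m$ matrix $M$ over $\mathbb{Z}_k$ with $M_{ij}=a(v_i,r_j)$ if $v_i$ is incident to $r_j$, and $M_{ij}=0$ otherwise. Patterns and configurations: a push pattern is a vector $\mathbf p\in\mathbb{Z}_k^m$, and $\mathbf p(r_j)=p_j$ is the number of times $r_j$ is pushed. A region $r$ is not pushed in $\mathbf p$ if $\mathbf p(r)=0$. A color configuration is a vector $\mathbf c\in\mathbb{Z}_k^n$. Applying $\mathbf p$ to $\mathbf c$ yields $\mathbf c+M\mathbf p$. The configuration $\mathbf c$ is solvable if some $\mathbf p$ satisfies $M\mathbf p=-\mathbf c$; such a $\mathbf p$ is a solving pattern for $\mathbf c$. $D$ is always solvable in the version if every $\mathbf c\in\mathbb{Z}_k^n$ is solvable. A null pattern is an element of $Ker_k(M)=\{\mathbf p\in\mathbb{Z}_k^m: M\mathbf p=0\}$. Checkerboard shading: a checkerboard shading of $D$ is a shading of some of its regions such that, of any two adjacent regions, exactly one is shaded.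 *)

From HB Require Import structures.
From mathcomp Require Import all_boot all_order all_fingroup all_algebra.
Set Implicit Arguments. Unset Strict Implicit. Unset Printing Implicit Defensive.
Import GRing.Theory.
Local Open Scope ring_scope.

(* A link diagram with at least one crossing, encoded as a combinatorial map
   (the underlying 4-valent plane graph).  Darts are half-edges; [vrot] is the
   cyclic (counterclockwise) rotation of the darts around their vertex, and
   [einv] exchanges the two ends of an edge. *)
Record diagram := Diagram {
  dart : finType;
  vrot : {perm dart};
  einv : {perm dart} }.

Section DiagramDefs.
Variable D : diagram.

(* face permutation: traverse an edge, then turn at the next vertex *)
Definition fphi (d : dart D) : dart D := vrot D (einv D d).
(* straight-ahead continuation of a strand through a crossing *)
Definition straight (d : dart D) : dart D := vrot D (vrot D (einv D d)).
Definition vrotf (d : dart D) : dart D := vrot D d.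

Definition vertices : {set {set dart D}} :=
  [set [set e | fconnect vrotf d e] | d : dart D].
Definition faces : {set {set dart D}} :=
  [set [set e | fconnect fphi d e] | d : dart D].
Definition strands : {set {set dart D}} :=
  [set [set e | fconnect straight d e] | d : dart D].

Local Notation vertex := {A : {set dart D} | A \in vertices}.
Local Notation region := {A : {set dart D} | A \in faces}.

(* D is (the underlying graph of) a knot diagram in S^2 with >= 1 crossing:
   a connected map, every vertex of valence 4, of genus 0 (Euler's formula),
   whose straight-ahead walks form a single closed curve (each component
   gives two orbits of darts, one per direction). *)
Definition knot_diagram : Prop :=
  [/\ (forall d : dart D, einv D (einv D d) = d /\ einv D d != d),
      forall d : dart D, fingraph.order vrotf d = 4%N,
      forall d e : dart D,
        connect (fun x y => (y == vrot D x) || (y == einv D x)) d e,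
      (#|vertices| + #|faces| = (#|dart D|)./2 + 2)%N
    & #|strands| = 2%N].

Definition incident (v : vertex) (r : region) : bool :=
  [exists d, (d \in val v) && (d \in val r)].

(* irreducible vertex: its four corners lie in four distinct regions *)
Definition irreducible_vertex (v : vertex) : Prop :=
  forall d e : dart D, d \in val v -> e \in val v ->
    fconnect fphi d e -> d = e.
Definition reduced : Prop := forall v : vertex, irreducible_vertex v.

Definition adjacent (r r' : region) : Prop :=
  exists2 d : dart D, d \in val r & einv D d \in val r'.
Definition checkerboard (sh : {set region}) : Prop :=
  forall r r' : region, adjacent r r' -> (r \in sh) != (r' \in sh).

(* original game with k = 2: all increment numbers equal 1;
   game_apply p = M p for the game matrix M *)
Definition game_apply (p : {ffun region -> 'Z_2}) : {ffun vertex -> 'Z_2} :=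
  [ffun v => \sum_(r : region) (if incident v r then 1 else 0) * p r].
Definition solving (c : {ffun vertex -> 'Z_2}) (p : {ffun region -> 'Z_2}) : bool :=
  game_apply p == - c.
End DiagramDefs.

Notation vertex D := {A : {set dart D} | A \in vertices D}.
Notation region D := {A : {set dart D} | A \in faces D}.

From HB Require Import structures.
From mathcomp Require Import all_boot all_order all_fingroup all_algebra.
From mathcomp Require Import zify ring.
Set Implicit Arguments. Unset Strict Implicit. Unset Printing Implicit Defensive.
Import GRing.Theory.
Local Open Scope ring_scope.

(* Around a crossing the four corners alternate in colour, so pushing every
   region of one colour changes no vertex: the patterns constant on each colour
   class are null.  Conversely, for a null pattern p the vertex relation makes
   the jump of p across an edge invariant under the straight-ahead continuation
   of a strand; a knot has a single strand, met in both directions from any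
   edge, so the jump is a constant c, and p + c [shaded] is invariant across
   edges and around vertices, hence constant.  By Euler's formula a knot
   diagram with n crossings has n + 2 regions, so the configurations solvable
   without pushing S, i.e. the image of the 2^(n+2-|S|) patterns vanishing on
   S, number 2^(n+2-|S|) divided by the number of null patterns vanishing on S:
   one if S meets both colours, two if S is nonempty and monochromatic. *)

(* The library declares no finZmodType instance on {ffun aT -> R}, although
   both its finType and zmodType instances exist. *)
HB.saturate finfun_of.

Lemma pchar_Z2 : (2 \in [pchar 'Z_2])%N. Proof. by []. Qed.

Lemma muln2_eq_exp2 m k : (m * 2 = 2 ^ k)%N -> m = (2 ^ k.-1)%N.
Proof.
case: k => [/(congr1 odd)|k]; first by rewrite oddM andbF.
by rewrite expnSr => /eqP; rewrite eqn_pmul2r // => /eqP.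
Qed.

Section MorphismImage.
Variables (U V : finZmodType) (f : U -> V) (A : {set U}).
Hypotheses (fB : zmod_morphism f) (A_closed : zmod_closed A).

Lemma zmod_morphism_inj_in :
  A :&: [set x | f x == 0] \subset [set 0] -> {in A &, injective f}.
Proof.
move=> /subsetP kerA x y Ax Ay fxy; apply/eqP; rewrite -subr_eq0 -in_set1.
by apply: kerA; rewrite !inE A_closed.2 // fB fxy subrr eqxx.
Qed.

Lemma card_imset_mul_kernel :
  (#|f @: A| * #|A :&: [set x | f x == 0%R]|)%N = #|A|.
Proof.
symmetry; rewrite -sum1_card (partition_big_imset f) /= -sum_nat_const.
apply: eq_bigr => _ /imsetP[x0 Ax0 ->].
rewrite -(card_imset _ (subrI x0)) -sum1_card; apply: eq_bigl => x.
apply/andP/imsetP => [[Ax /eqP fx]|[k /setIP[Ak]]].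
  by exists (x0 - x); rewrite ?subKr // !inE A_closed.2 // fB fx subrr eqxx.
by rewrite inE => /eqP fk ->; rewrite A_closed.2 // fB fk subr0.
Qed.

End MorphismImage.

Section ZeroOn.
Context {T : finType} {R : finZmodType}.

Definition zero_on (S : {set T}) : {set {ffun T -> R}} :=
  [set p : {ffun T -> R} | [forall r in S, p r == 0]].

Lemma zero_on_closed S : zmod_closed (zero_on S).
Proof.
split; first by rewrite inE; apply/forall_inP => r _; rewrite ffunE.
move=> p q; rewrite !inE => /forall_inP p0 /forall_inP q0; apply/forall_inP => r rS.
by rewrite !ffunE (eqP (p0 r rS)) (eqP (q0 r rS)) subrr.
Qed.

Lemma card_zero_on S : #|zero_on S| = (#|R| ^ (#|T| - #|S|))%N.
Proof.
rewrite -[in RHS](setCK S) -cardsCs -(card_pffun_on 0); apply: eq_card => p.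
rewrite inE; apply/forall_inP/pffun_onP => [p0 | [/subsetP p_supp _] r rS].
  split=> [|_ _ //]; apply/subsetP => r; rewrite !inE.
  by apply: contraNN => rS; exact: p0.
apply: contraLR rS => pr; have := p_supp r; rewrite !inE; exact.
Qed.

Lemma mem_zero_on2 (a b : T) (p : {ffun T -> R}) :
  (p \in zero_on [set a; b]) = (p a == 0) && (p b == 0).
Proof.
rewrite inE; apply/forall_inP/andP => [p0 | [pa pb] r].
  by split; apply: p0; rewrite !inE eqxx ?orbT.
by rewrite !inE => /orP[]/eqP->.
Qed.

End ZeroOn.

Lemma connect_invariant (T : finType) (R : eqType) (e : rel T) (k : T -> R) :
  (forall x y, e x y -> k y = k x) -> forall x y, connect e x y -> k y = k x.
Proof.
move=> ek x y xy; apply/eqP.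
have closed_a : closed e [pred z | k z == k x] by move=> u v /ek; rewrite !inE => ->.
by rewrite -[_ == _]/(y \in [pred z | k z == k x]) -(closed_connect closed_a xy) inE.
Qed.

Lemma game_apply_zmod_morphism (D : diagram) : zmod_morphism (@game_apply D).
Proof.
move=> p q; apply/ffunP => v; rewrite !ffunE -sumrB; apply: eq_bigr => r _.
by rewrite !ffunE mulrBr.
Qed.

Lemma solvingE (D : diagram) c (p : {ffun region D -> 'Z_2}) :
  solving c p = (game_apply p == c).
Proof.
by rewrite /solving; congr (_ == _); apply/ffunP => v; rewrite ffunE oppr_pchar2 ?pchar_Z2.
Qed.

Lemma solvable_setE (D : diagram) (S : {set region D}) :
  [set c : {ffun vertex D -> 'Z_2} | [exists p, solving c p && [forall r in S, p r == 0]]]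
    = @game_apply D @: zero_on S.
Proof.
apply/setP => c; rewrite inE; apply/existsP/imsetP => [[p] | [p pS ->]].
  by rewrite solvingE => /andP[/eqP <- pS]; exists p; rewrite ?inE.
by exists p; rewrite solvingE eqxx; rewrite inE in pS.
Qed.

Section KnotDiagram.
Variable D : diagram.

Lemma fphi_inj : injective (@fphi D).
Proof. by move=> x y /perm_inj/perm_inj. Qed.

Lemma vrotf_inj : injective (@vrotf D).
Proof. exact: perm_inj. Qed.

Lemma straight_inj : injective (@straight D).
Proof. by move=> x y /perm_inj/perm_inj/perm_inj. Qed.

Definition region_of (d : dart D) : region D :=
  exist _ [set e | fconnect (@fphi D) d e] (imset_f _ (isT : d \in dart D)).
Definition vertex_of (d : dart D) : vertex D :=
  exist _ [set e | fconnect (@vrotf D) d e] (imset_f _ (isT : d \in dart D)).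

Lemma mem_region_of d e : (e \in val (region_of d)) = fconnect (@fphi D) d e.
Proof. by rewrite inE. Qed.

Lemma eq_region_of d e : (region_of d == region_of e) = fconnect (@fphi D) d e.
Proof.
apply/eqP/idP => [/(congr1 val) de | de].
  by rewrite -mem_region_of de mem_region_of connect0.
apply: val_inj; apply/setP => x.
by rewrite !mem_region_of (same_connect (fconnect_sym fphi_inj) de).
Qed.

Lemma region_of_surj (r : region D) : exists d, r = region_of d.
Proof.
case: r => A rA; have /imsetP[d _ Ad] := rA.
by exists d; apply: val_inj; rewrite /= Ad.
Qed.

Lemma vertex_of_surj (v : vertex D) : exists d, v = vertex_of d.
Proof.
case: v => A vA; have /imsetP[d _ Ad] := vA.
by exists d; apply: val_inj; rewrite /= Ad.
Qed.

Lemma checkerboard_setC (sh : {set region D}) :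
  checkerboard sh -> checkerboard (~: sh).
Proof. by move=> sh_cb r r' /sh_cb; rewrite !inE; case: (_ \in sh); case: (_ \in sh). Qed.

Hypothesis vrot_order4 : forall d, fingraph.order (@vrotf D) d = 4%N.

Lemma mem_vertex_of d e : (e \in val (vertex_of d)) = (e \in traject (@vrotf D) d 4).
Proof. by rewrite inE fconnect_orbit /fingraph.orbit vrot_order4. Qed.

Lemma corners_uniq d : uniq (traject (@vrotf D) d 4).
Proof. by have := orbit_uniq (@vrotf D) d; rewrite /fingraph.orbit vrot_order4. Qed.

Lemma vrot4 d : vrot D (vrot D (vrot D (vrot D d))) = d.
Proof. by have := iter_order vrotf_inj d; rewrite vrot_order4. Qed.

Lemma vrot2_neq d : vrot D (vrot D d) != d.
Proof.
by have := corners_uniq d; rewrite /= !inE => /and4P[/norP[_ /norP[+ _]] _ _ _]; rewrite eq_sym.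
Qed.

Lemma incident_vertex_of d r :
  incident (vertex_of d) r = (r \in map region_of (traject (@vrotf D) d 4)).
Proof.
apply/existsP/mapP => [[e /andP[de re]] | [e de ->]].
  have [x rx] := region_of_surj r; rewrite rx mem_region_of in re.
  by exists e; [rewrite -mem_vertex_of | rewrite rx; apply/eqP; rewrite eq_region_of].
by exists e; rewrite mem_vertex_of de mem_region_of connect0.
Qed.

Lemma card_dart : #|dart D| = (#|vertices D| * 4)%N.
Proof.
have vertices_partition : partition (vertices D) [set: dart D].
  have -> : vertices D = equivalence_partition (fconnect (@vrotf D)) setT.
    apply/setP => A; apply/imsetP/imsetP => -[d _ ->]; exists d => //;
    by apply/setP => e; rewrite !inE.
  apply: equivalence_partitionP => x y z _ _ _; split; first exact: connect0.
  by move=> xy; apply: (same_connect (fconnect_sym vrotf_inj) xy).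
rewrite -cardsT (card_uniform_partition (n := 4) _ vertices_partition) // => _ /imsetP[d _ ->].
by rewrite -(vrot_order4 d); apply: eq_card => e; rewrite inE.
Qed.

Hypothesis euler : (#|vertices D| + #|faces D| = (#|dart D|)./2 + 2)%N.

Lemma card_regions : #|{: region D}| = (#|{: vertex D}| + 2)%N.
Proof.
move: euler; rewrite card_dart !card_sig.
have -> : (#|vertices D| * 4 = (#|vertices D| * 2).*2)%N by rewrite -muln2 -mulnA.
rewrite doubleK -[#|faces D|]/#|[pred A | A \in faces D]|.
by rewrite -[#|vertices D|]/#|[pred A | A \in vertices D]|; lia.
Qed.

Hypothesis einvK : involutive (einv D).

Lemma region_of_vrot d : region_of (vrot D d) = region_of (einv D d).
Proof.
have -> : vrot D d = fphi (einv D d) by rewrite /fphi einvK.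
by apply/eqP; rewrite eq_sym eq_region_of fconnect1.
Qed.

Lemma straight_einv_straight d : straight (einv D (straight d)) = einv D d.
Proof. by rewrite /straight einvK vrot4. Qed.

Lemma iter_straight_einv k d :
  iter k (@straight D) (einv D (iter k (@straight D) d)) = einv D d.
Proof. by elim: k => // k IHk; rewrite iterSr iterS straight_einv_straight. Qed.

Lemma iter_straight_inj k : injective (iter k (@straight D)).
Proof. by elim: k => // k IHk x y /= /straight_inj /IHk. Qed.

Hypothesis einv_neq : forall d, einv D d != d.

Lemma strand_not_reversible d : ~~ fconnect (@straight D) d (einv D d).
Proof.
(* If straight^(2k+b) d = einv d then, with z = straight^k d, reversing the
   walk gives straight^b z = einv z, which fails for b = 0 and for b = 1. *)
apply/negP => /iter_findex; set j := findex _ _ _.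
rewrite -(odd_double_half j) -addnn addnA iterD addnC iterD.
rewrite -[in RHS](iter_straight_einv j./2); set z := iter _ _ d => /iter_straight_inj.
case: (odd j) => /= [straight_z | z_einv].
  by move: (vrot2_neq (einv D z)); rewrite -/(straight z) straight_z eqxx.
by move: (einv_neq z); rewrite -z_einv eqxx.
Qed.

Hypothesis two_strands : #|strands D| = 2%N.

Lemma strand_cover d e :
  fconnect (@straight D) d e || fconnect (@straight D) (einv D d) e.
Proof.
pose strand x := [set y | fconnect (@straight D) x y].
have strand_in x : strand x \in strands D by apply: imset_f.
have in_strand x : x \in strand x by rewrite inE connect0.
have strands_ne : strand d != strand (einv D d).
  apply: contraNneq (strand_not_reversible d) => E.
  by move: (in_strand (einv D d)); rewrite -E inE.
have strandsE : strands D = [set strand d; strand (einv D d)].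
  apply/eqP; rewrite eq_sym eqEcard cards2 strands_ne two_strands andbT.
  by apply/subsetP => A; rewrite !inE => /orP[]/eqP ->.
have := strand_in e; rewrite strandsE !inE => /orP[]/eqP E;
  by have := in_strand e; rewrite E inE => ->; rewrite ?orbT.
Qed.

Hypothesis D_reduced : reduced D.

Lemma corner_regions_uniq d : uniq (map region_of (traject (@vrotf D) d 4)).
Proof.
rewrite map_inj_in_uniq ?corners_uniq // => x y dx dy /eqP.
by rewrite eq_region_of; apply: (D_reduced (v := vertex_of d)); rewrite mem_vertex_of.
Qed.

Lemma game_apply_vertex_of p d :
  game_apply p (vertex_of d) = p (region_of d) + p (region_of (vrot D d))
    + p (region_of (vrot D (vrot D d))) + p (region_of (vrot D (vrot D (vrot D d)))).
Proof.
rewrite ffunE (eq_bigr (fun r => if incident (vertex_of d) r then p r else 0)).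
  rewrite -big_mkcond (eq_bigl _ _ (incident_vertex_of d)) -big_uniq ?corner_regions_uniq //=.
  by rewrite !big_cons big_nil addr0 !addrA.
by move=> r _; case: ifP; rewrite ?mul1r ?mul0r.
Qed.

Hypothesis connected :
  forall d e, connect (fun x y => (y == vrot D x) || (y == einv D x)) d e.

Section Shading.
Variables (sh : {set region D}) (sh_cb : checkerboard sh).

Lemma checkerboard_einv d : (region_of (einv D d) \in sh) = (region_of d \notin sh).
Proof.
have adj : adjacent (region_of d) (region_of (einv D d)).
  by exists d; rewrite mem_region_of connect0.
by move: (sh_cb adj); case: (_ \in sh); case: (_ \in sh).
Qed.

Lemma checkerboard_vrot d : (region_of (vrot D d) \in sh) = (region_of d \notin sh).
Proof. by rewrite region_of_vrot checkerboard_einv. Qed.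

Definition colour_pattern (a b : 'Z_2) : {ffun region D -> 'Z_2} :=
  [ffun r => if r \in sh then a else b].

Lemma colour_pattern_null a b : game_apply (colour_pattern a b) = 0.
Proof.
apply/ffunP => v; have [d ->] := vertex_of_surj v.
rewrite game_apply_vertex_of !ffunE !checkerboard_vrot !negbK.
by case: (_ \in sh); rewrite /= -addrA addrr_pchar2 ?pchar_Z2.
Qed.

Lemma null_colour_pattern p : game_apply p = 0 -> exists a b, p = colour_pattern a b.
Proof.
move=> p_null; case: (pickP (fun _ : dart D => true)) => [d0 _ | no_dart]; last first.
  by exists 0, 0; apply/ffunP => r; have [d _] := region_of_surj r; have := no_dart d.
pose P x := p (region_of x).
have P_vrot x : P (vrot D x) = P (einv D x) by rewrite /P region_of_vrot.
have P_corners x :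
    P x + P (vrot D x) + P (vrot D (vrot D x)) + P (vrot D (vrot D (vrot D x))) = 0.
  by rewrite /P -game_apply_vertex_of p_null ffunE.
(* jump x is the change of p across the edge of x; the vertex relation makes
   it invariant along strands. *)
pose jump x := P x + P (einv D x).
have jump_straight x : jump (straight x) = jump x.
  have P_x : P x = P (vrot D (einv D x)) by rewrite P_vrot einvK.
  rewrite /jump /straight -P_vrot P_x; apply/eqP.
  rewrite -subr_eq0 (oppr_pchar2 pchar_Z2) -(P_corners (einv D x)); apply/eqP; ring.
have jump_const x : jump x = jump d0.
  have jump_inv : invariant (@straight D) jump =1 xpredT by move=> z; apply/eqP.
  case/orP: (strand_cover d0 x) => /(fconnect_invariant jump_inv) <- //.
  by rewrite /jump einvK addrC.
pose Q x := P x + (if region_of x \in sh then jump d0 else 0).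
have Q_einv x : Q (einv D x) = Q x.
  have P_einv : P (einv D x) = P x + jump d0.
    by rewrite -(jump_const x) /jump addrA addrr_pchar2 ?pchar_Z2 ?add0r.
  rewrite /Q P_einv checkerboard_einv; case: (_ \in sh); rewrite /= ?addr0 //.
  by rewrite -addrA addrr_pchar2 ?pchar_Z2 ?addr0.
have Q_vrot x : Q (vrot D x) = Q x by rewrite -[RHS]Q_einv /Q P_vrot region_of_vrot.
have Q_const x : Q x = Q d0.
  by apply: connect_invariant (connected d0 x) => y z /orP[]/eqP ->.
exists (Q d0 - jump d0), (Q d0); apply/ffunP => r; have [x ->] := region_of_surj r.
move: (Q_const x); set e := Q d0; rewrite ffunE /Q.
by case: (_ \in sh) => <-; rewrite ?addrK ?addr0.
Qed.

Lemma null_patternP p : reflect (exists a b, p = colour_pattern a b) (game_apply p == 0).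
Proof.
apply: (iffP eqP) => [/null_colour_pattern // | [a [b ->]]].
exact: colour_pattern_null.
Qed.

Lemma zero_on_bicoloured_null (S : {set region D}) :
  S :&: sh != set0 -> S :\: sh != set0 ->
  zero_on S :&: [set p | game_apply p == 0] \subset [set 0 : {ffun region D -> 'Z_2}].
Proof.
move=> /set0Pn[r /setIP[rS rsh]] /set0Pn[r' /setDP[r'S r'sh]].
apply/subsetP => p; rewrite !inE => /andP[/forall_inP p0 /null_patternP[a [b p_ab]]].
move: (p0 r rS) (p0 r' r'S); rewrite p_ab !ffunE rsh (negbTE r'sh) => /eqP-> /eqP->.
by apply/eqP/ffunP => q; rewrite !ffunE if_same.
Qed.

Lemma card_zero_on_shaded_null (S : {set region D}) r :
  r \in S -> S \subset sh -> #|zero_on S :&: [set p | game_apply p == 0]| = 2%N.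
Proof.
move=> rS /subsetP S_sh; have [x rx] := region_of_surj r.
have unshaded : region_of (einv D x) \notin sh by rewrite checkerboard_einv negbK -rx S_sh.
have -> : zero_on S :&: [set p | game_apply p == 0] = [set colour_pattern 0 b | b : 'Z_2].
  apply/setP => p; rewrite !inE; apply/andP/imsetP => [[/forall_inP p0] | [b _ ->]].
    case/null_patternP => a [b p_ab]; exists b => //.
    by move: (p0 r rS); rewrite p_ab ffunE S_sh // => /eqP->.
  split; last exact/eqP/colour_pattern_null.
  by apply/forall_inP => q qS; rewrite ffunE S_sh.
have colour_inj : injective (colour_pattern 0).
  move=> b b' /ffunP/(_ (region_of (einv D x))).
  by rewrite !ffunE (negbTE unshaded).
by rewrite card_imset ?card_ord.
Qed.

Lemma game_apply_inj_bicoloured (S : {set region D}) :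
  S :&: sh != set0 -> S :\: sh != set0 -> {in zero_on S &, injective (@game_apply D)}.
Proof.
move=> Ssh Sunsh.
apply: (zmod_morphism_inj_in (@game_apply_zmod_morphism D) (zero_on_closed S)).
exact: zero_on_bicoloured_null.
Qed.

Lemma card_solvable_shaded (S : {set region D}) r :
  r \in S -> S \subset sh -> (#|@game_apply D @: zero_on S| * 2)%N = #|zero_on (R := 'Z_2) S|.
Proof.
move=> rS S_sh.
rewrite -(card_imset_mul_kernel (@game_apply_zmod_morphism D) (zero_on_closed S)).
by rewrite (card_zero_on_shaded_null rS S_sh).
Qed.

Lemma exists_unique_solving r1 r2 : r1 \in sh -> r2 \notin sh ->
  forall c, exists! p, solving c p /\ p r1 = 0 /\ p r2 = 0.
Proof.
move=> r1sh r2sh c; set S := [set r1; r2].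
have inj : {in zero_on S &, injective (@game_apply D)}.
  apply: game_apply_inj_bicoloured; apply/set0Pn.
    by exists r1; rewrite !inE eqxx r1sh.
  by exists r2; rewrite !inE eqxx r2sh orbT.
have onto : @game_apply D @: zero_on S = setT.
  apply/eqP; rewrite eqEcard subsetT cardsT card_in_imset // card_zero_on card_ffun.
  have r12 : r1 != r2 by apply: contraNneq r2sh => <-.
  by rewrite !card_ord card_regions cards2 r12 /= addnK.
have /imsetP[p pS cp] : c \in @game_apply D @: zero_on S by rewrite onto inE.
move: pS; rewrite mem_zero_on2 => /andP[/eqP p1 /eqP p2].
exists p; split=> [|q [+ [q1 q2]]]; first by rewrite solvingE cp.
rewrite solvingE cp => /eqP/esym; apply: inj; by rewrite mem_zero_on2 ?p1 ?p2 ?q1 ?q2 eqxx.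
Qed.

End Shading.

End KnotDiagram.

Theorem mainTheorem11 (n : nat) (D : diagram)
  (HD : knot_diagram D) (Hred : reduced D) (Hn : #|{: vertex D}| = n)
  (sh : {set region D}) (Hsh : checkerboard sh) :
  [/\ forall (r1 r2 : region D), r1 \in sh -> r2 \notin sh ->
      forall c : {ffun vertex D -> 'Z_2},
        exists! p : {ffun region D -> 'Z_2},
          solving c p /\ p r1 = 0 /\ p r2 = 0,
      forall S : {set region D},
        S :&: sh != set0 -> S :\: sh != set0 ->
        #|[set c : {ffun vertex D -> 'Z_2} |
            [exists p, solving c p && [forall r in S, p r == 0]]]|
          = (2 ^ (n + 2 - #|S|))%N
    & forall S : {set region D}, (0 < #|S|)%N ->
        (S \subset sh \/ S \subset ~: sh) ->
        #|[set c : {ffun vertex D -> 'Z_2} |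
            [exists p, solving c p && [forall r in S, p r == 0]]]|
          = (2 ^ (n + 1 - #|S|))%N].
Proof.
have [/all_and2[einvK einv_neq] vrot_order4 connected euler two_strands] := HD.
have card_zero_onE (S : {set region D}) :
    #|zero_on (R := 'Z_2) S| = (2 ^ (n + 2 - #|S|))%N.
  by rewrite card_zero_on card_ord card_regions // Hn.
split.
- by move=> r1 r2; apply: exists_unique_solving.
- move=> S Ssh Sunsh; rewrite solvable_setE card_in_imset ?card_zero_onE //.
  by move: Ssh Sunsh; apply: game_apply_inj_bicoloured.
- move=> S /card_gt0P[r rS] S_mono; rewrite solvable_setE.
  have -> : (n + 1 - #|S| = (n + 2 - #|S|).-1)%N by lia.
  apply: muln2_eq_exp2; rewrite -card_zero_onE.
  have Hsh_compl := checkerboard_setC Hsh.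
  by case: S_mono => S_sh; move: rS S_sh; apply: card_solvable_shaded.
Qed.
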